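(* Under the hypotheses and notation of Theorem 1 (synchronous HSAG with the stated $\gamma,\theta$, conditions $\frac1\kappa+2Lc\eta^2(1+\frac1\beta)\le\frac1n$, $\gamma>0$, $\theta<1$, and $p_j\propto(1-\frac1\kappa)^{m-j}$), suppose moreover that $\bar\theta:=\theta(1+1/\gamma)<1$. Then for all $k\ge 0$, $$\mathbb{E}\big[f(\tilde x^{k})-f(x^* )\big]\le\bar\theta^{\,k}\,\big[f(x^0)-f(x^* )\big].$$
   Context: Setting: $f_1,\dots,f_n:\mathbb{R}^d\to\mathbb{R}$ convex, differentiable, each with $L$-Lipschitz gradient; $f=\frac1n\sum_i f_i$ is $\lambda$-strongly convex with minimizer $x^*$; $S\subseteq[n]$; $c>0,\beta>0,\kappa>1$, $\eta>0$, $m\ge1$; $\gamma=\kappa[1-(1-\frac1\kappa)^m](2c\eta(1-L\eta(1+\beta))-\frac1n-\frac{2c}{\kappa\lambda})$ and $\theta=\max\{\frac{2c}{\gamma\lambda}(1-\frac1\kappa)^m+\frac{2Lc\eta^2}{\gamma}(1+\frac1\beta)\kappa[1-(1-\frac1\kappa)^m],\ (1-\frac1\kappa)^m\}$. Synchronous HSAG algorithm: $x^0\in\mathbb{R}^d$, $\tilde x^0=x^0$, $\alpha_i^0=x^0$. Epoch $k+1$ consists of steps $t=km,\dots,km+m-1$ with $x^{km}=\tilde x^k$. At step $t$, $i_t$ is uniform on $[n]$ independent of the past and $x^{t+1}=x^t-\eta(\nabla f_{i_t}(x^t)-\nabla f_{i_t}(\alpha_{i_t}^t)+\frac1n\sum_i\nabla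 f_i(\alpha_i^t))$. For $i\in S$: $\alpha_i^{t+1}=x^t$ if $i_t=i$, else $\alpha_i^{t+1}=\alpha_i^t$; for $i\notin S$: $\alpha_i^t=\tilde x^k$ throughout epoch $k+1$. At epoch end, $\tilde x^{k+1}$ is chosen from $\{x^{km},\dots,x^{km+m-1}\}$, picking $x^{km+j-1}$ with probability $p_j$, and $x^{(k+1)m}:=\tilde x^{k+1}$. *)

From Stdlib Require Import Reals Lra List.
From Stdlib Require Vectors.Fin.
Open Scope R_scope.

Definition vec (d : nat) : Type := Fin.t d -> R.

Fixpoint fsum (d : nat) : (Fin.t d -> R) -> R :=
  match d return (Fin.t d -> R) -> R with
  | O => fun _ => 0
  | Datatypes.S d' => fun u => u Fin.F1 + fsum d' (fun i => u (Fin.FS i))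
  end.

Definition vadd {d} (x y : vec d) : vec d := fun c => x c + y c.
Definition vsub {d} (x y : vec d) : vec d := fun c => x c - y c.
Definition vscale {d} (a : R) (x : vec d) : vec d := fun c => a * x c.
Definition inner {d} (x y : vec d) : R := fsum d (fun c => x c * y c).
Definition vnorm {d} (x : vec d) : R := sqrt (inner x x).

Fixpoint rsum (n : nat) (F : nat -> R) : R :=
  match n with
  | O => 0
  | Datatypes.S n' => rsum n' F + F n'
  end.

Definition vsumn {d} (n : nat) (F : nat -> vec d) : vec d :=
  fun c => rsum n (fun l => F l c).

Definition is_gradient {d} (f : vec d -> R) (g : vec d -> vec d) : Prop :=
  forall x : vec d, forall eps, 0 < eps -> exists delta, 0 < delta /\
    forall h : vec d, vnorm h < delta ->
      Rabs (f (vadd x h) - f x - inner (g x) h) <= eps * vnorm h.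

Definition convex {d} (f : vec d -> R) : Prop :=
  forall (x y : vec d) (t : R), 0 <= t <= 1 ->
    f (vadd (vscale t x) (vscale (1 - t) y)) <= t * f x + (1 - t) * f y.

Definition strongly_convex {d} (lam : R) (f : vec d -> R) : Prop :=
  forall (x y : vec d) (t : R), 0 <= t <= 1 ->
    f (vadd (vscale t x) (vscale (1 - t) y))
      <= t * f x + (1 - t) * f y - lam / 2 * t * (1 - t) * (vnorm (vsub x y)) ^ 2.

Definition lipschitz_map {d} (L : R) (g : vec d -> vec d) : Prop :=
  forall x y : vec d, vnorm (vsub (g x) (g y)) <= L * vnorm (vsub x y).

Definition favg {d} (n : nat) (fs : nat -> vec d -> R) (x : vec d) : R :=
  / INR n * rsum n (fun i => fs i x).

Definition hsag_gamma (n m : nat) (L lam c beta kappa eta : R) : R :=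
  kappa * (1 - (1 - / kappa) ^ m) *
    (2 * c * eta * (1 - L * eta * (1 + beta)) - / INR n - 2 * c / (kappa * lam)).

Definition hsag_theta (n m : nat) (L lam c beta kappa eta : R) : R :=
  let g := hsag_gamma n m L lam c beta kappa eta in
  Rmax (2 * c / (g * lam) * (1 - / kappa) ^ m
        + 2 * L * c * eta ^ 2 / g * (1 + / beta) * kappa * (1 - (1 - / kappa) ^ m))
       ((1 - / kappa) ^ m).

(** Epoch-end selection probabilities p_j, j = 1..m, p_j proportional to (1-1/kappa)^(m-j). *)
Definition hsag_p (kappa : R) (m j : nat) : R :=
  (1 - / kappa) ^ (m - j) / rsum m (fun l => (1 - / kappa) ^ (m - (l + 1))).

Definition step_x {d} (n : nat) (eta : R) (g : nat -> vec d -> vec d)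
    (al : nat -> vec d) (x : vec d) (i : nat) : vec d :=
  vsub x (vscale eta (vadd (vsub (g i x) (g i (al i)))
                           (vscale (/ INR n) (vsumn n (fun l => g l (al l)))))).

Definition step_al {d} (Sset : nat -> bool) (al : nat -> vec d) (x : vec d) (i : nat)
    : nat -> vec d :=
  fun l => if andb (Sset l) (Nat.eqb l i) then x else al l.

(** Exact expectation over one epoch of r remaining inner steps (i_t uniform on
    {0..n-1}, independent), with continuation K receiving the list of iterates
    [x^{km}; ...; x^{km+m-1}] and the final table alpha^{(k+1)m}. *)
Fixpoint epoch_E {d} (n : nat) (eta : R) (g : nat -> vec d -> vec d)
    (Sset : nat -> bool) (r : nat) (x : vec d) (al : nat -> vec d)
    (hist : list (vec d)) (K : list (vec d) -> (nat -> vec d) -> R) : R :=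
  match r with
  | O => K hist al
  | Datatypes.S r' =>
      / INR n * rsum n (fun i =>
        epoch_E n eta g Sset r' (step_x n eta g al x i) (step_al Sset al x i)
                (hist ++ x :: nil) K)
  end.

(** hsag_E k xt al Phi = E[Phi(tilde x^{k})] for the synchronous HSAG process
    started from snapshot xt and table al (entries for i in S are carried over,
    entries for i not in S are reset to the snapshot at each epoch start);
    tilde x^{k+1} = x^{km+j-1} with probability p_j, independently of the i_t. *)
Fixpoint hsag_E {d} (n m : nat) (eta kappa : R) (g : nat -> vec d -> vec d)
    (Sset : nat -> bool) (Phi : vec d -> R) (k : nat) (xt : vec d) (al : nat -> vec d) : R :=
  match k with
  | O => Phi xt
  | Datatypes.S k' =>
      epoch_E n eta g Sset m xt (fun l => if Sset l then al l else xt) nil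
        (fun hist al' =>
           rsum m (fun l => hsag_p kappa m (l + 1) *
                            hsag_E n m eta kappa g Sset Phi k' (nth l hist xt) al'))
  end.

(* Let F(x) = f(x) - f(xs) for the minimiser xs, and D_i the Bregman divergence of f_i at xs.
   Along an epoch, T(x, alpha) = c |x - xs|^2 + (1/n) sum_(i in S) D_i(alpha_i) contracts in
   expectation by the factor 1 - 1/kappa at every inner step, with a further decrease
   proportional to F(x) and an increase proportional to the staleness F(tilde x) of the
   snapshot; the variance of the
   search direction is controlled by co-coercivity of the gradients.  The weights
   (1 - 1/kappa)^(m-j) of the epoch-end choice are exactly the discount factors left by this
   recursion, so one epoch maps gamma F(tilde x) + (1/n) sum_(i in S) D_i(alpha_i) to at most
   theta times itself in expectation.  Starting from alpha = x^0 the table part is at most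
   F(x^0), whence the factor 1 + 1/gamma. *)
From Stdlib Require Import Reals Lra Lia List FunctionalExtensionality.
From Coquelicot Require Import Coquelicot.
Open Scope R_scope.

Lemma rsum_ext n F G : (forall i, (i < n)%nat -> F i = G i) -> rsum n F = rsum n G.
Proof.
  induction n as [|n IH]; intro H; simpl; auto.
  rewrite IH by (intros; apply H; lia). rewrite H by lia. reflexivity.
Qed.

Lemma rsum_add n F G : rsum n (fun i => F i + G i) = rsum n F + rsum n G.
Proof. induction n as [|n IH]; simpl; [ring|]. rewrite IH; ring. Qed.

Lemma rsum_scal n a F : rsum n (fun i => a * F i) = a * rsum n F.
Proof. induction n as [|n IH]; simpl; [ring|]. rewrite IH; ring. Qed.

Lemma rsum_sub n F G : rsum n (fun i => F i - G i) = rsum n F - rsum n G.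
Proof. induction n as [|n IH]; simpl; [ring|]. rewrite IH; ring. Qed.

Lemma rsum_const n a : rsum n (fun _ => a) = INR n * a.
Proof. induction n as [|n IH]; simpl rsum; [simpl; ring|]. rewrite IH, S_INR. ring. Qed.

Lemma rsum_le n F G : (forall i, (i < n)%nat -> F i <= G i) -> rsum n F <= rsum n G.
Proof.
  induction n as [|n IH]; intro H; simpl; [lra|].
  pose proof (H n (Nat.lt_succ_diag_r n)).
  assert (rsum n F <= rsum n G) by (apply IH; intros; apply H; lia). lra.
Qed.

Lemma rsum_ge0 n F : (forall i, (i < n)%nat -> 0 <= F i) -> 0 <= rsum n F.
Proof.
  intro H. rewrite <- (Rmult_0_r (INR n)), <- rsum_const. now apply rsum_le.
Qed.

Lemma rsum_exchange n m F :
  rsum n (fun i => rsum m (fun j => F i j)) = rsum m (fun j => rsum n (fun i => F i j)).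
Proof.
  induction n as [|n IH]; simpl.
  - rewrite rsum_const. ring.
  - rewrite IH, <- rsum_add. reflexivity.
Qed.

Lemma rsum_succ_l n F : rsum (S n) F = F 0%nat + rsum n (fun i => F (S i)).
Proof. induction n as [|n IH]; simpl in *; [ring|]. rewrite IH. ring. Qed.

Lemma rsum_rev n F : rsum n (fun i => F (n - (i + 1))%nat) = rsum n F.
Proof.
  revert F; induction n as [|n IH]; intro F; [reflexivity|].
  rewrite (rsum_succ_l n F). cbn [rsum]. replace (S n - (n + 1))%nat with 0%nat by lia.
  rewrite <- (IH (fun i => F (S i))).
  rewrite (rsum_ext n _ (fun i => F (S (n - (i + 1))))) by (intros; f_equal; lia). ring.
Qed.

Lemma rsum_eqb n l A B : (l < n)%nat ->
  rsum n (fun i => if Nat.eqb l i then A else B) = A + (INR n - 1) * B.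
Proof.
  induction n as [|n IH]; intro Hl; [lia|]. simpl rsum. rewrite S_INR.
  destruct (Nat.eq_dec l n) as [->|Hne].
  - rewrite Nat.eqb_refl, (rsum_ext n _ (fun _ => B)), rsum_const; [ring|].
    intros i Hi. destruct (Nat.eqb_spec n i); [lia|reflexivity].
  - rewrite IH by lia. destruct (Nat.eqb_spec l n); [lia|]. ring.
Qed.

Lemma rsum_geometric q m : (1 - q) * rsum m (fun i => q ^ i) = 1 - q ^ m.
Proof. induction m as [|m IH]; simpl rsum; simpl; [ring|]. rewrite Rmult_plus_distr_l, IH. ring. Qed.

Lemma rsum_geometric_inv k m : k <> 0 ->
  rsum m (fun i => (1 - / k) ^ i) = k * (1 - (1 - / k) ^ m).
Proof.
  intro Hk. rewrite <- rsum_geometric. replace (1 - (1 - / k)) with (/ k) by ring.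
  field. exact Hk.
Qed.

Lemma inv_INR_ge0 n : 0 <= / INR n.
Proof.
  destruct n as [|n]; [simpl; rewrite Rinv_0; lra|].
  left. apply Rinv_0_lt_compat, lt_0_INR. lia.
Qed.

Lemma fsum_ext d (F G : Fin.t d -> R) : (forall c, F c = G c) -> fsum d F = fsum d G.
Proof.
  induction d as [|d IH]; intro H; simpl; [reflexivity|].
  rewrite H. f_equal. apply IH. auto.
Qed.

Lemma fsum_add d (F G : Fin.t d -> R) : fsum d (fun c => F c + G c) = fsum d F + fsum d G.
Proof.
  induction d as [|d IH]; simpl; [ring|].
  rewrite (IH (fun c => F (Fin.FS c)) (fun c => G (Fin.FS c))). ring.
Qed.

Lemma fsum_scal d a (F : Fin.t d -> R) : fsum d (fun c => a * F c) = a * fsum d F.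
Proof. induction d as [|d IH]; simpl; [ring|]. rewrite (IH (fun c => F (Fin.FS c))). ring. Qed.

Lemma fsum_ge0 d (F : Fin.t d -> R) : (forall c, 0 <= F c) -> 0 <= fsum d F.
Proof.
  induction d as [|d IH]; intro H; simpl; [lra|].
  pose proof (H Fin.F1). pose proof (IH (fun c => F (Fin.FS c)) (fun c => H _)). lra.
Qed.

Lemma fsum_eq0_ge0 d (F : Fin.t d -> R) :
  (forall c, 0 <= F c) -> fsum d F = 0 -> forall c, F c = 0.
Proof.
  induction d as [|d IH]; intros H E c; [inversion c|].
  simpl in E. pose proof (H Fin.F1).
  pose proof (fsum_ge0 d (fun c => F (Fin.FS c)) (fun c => H _)).
  apply (Fin.caseS' c (fun c => F c = 0)); [lra|].
  intro p. apply (IH (fun c => F (Fin.FS c))); auto. lra.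
Qed.

Lemma rsum_fsum n d (F : nat -> Fin.t d -> R) :
  rsum n (fun i => fsum d (F i)) = fsum d (fun c => rsum n (fun i => F i c)).
Proof.
  induction n as [|n IH]; simpl.
  - transitivity (0 * fsum d (fun _ => 1)); [ring|].
    rewrite <- fsum_scal. apply fsum_ext. intros; ring.
  - rewrite IH, <- fsum_add. reflexivity.
Qed.

Lemma Rle_of_forall_le_add_eps a b K :
  0 <= K -> (forall eps, 0 < eps -> a <= b + eps * K) -> a <= b.
Proof.
  intros HK H. apply Rle_plus_epsilon. intros eps He.
  assert (Hk : 0 < eps / (K + 1)) by (apply Rdiv_lt_0_compat; lra).
  specialize (H _ Hk).
  assert (eps / (K + 1) * K <= eps).
  { apply Rmult_le_reg_r with (K + 1); [lra|].
    replace (eps / (K + 1) * K * (K + 1)) with (eps * K) by (field; lra). nra. }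
  lra.
Qed.

Section Vectors.

Context {d : nat}.
Implicit Types u v w x y : vec d.

Definition sqnorm u := inner u u.

Lemma inner_comm u w : inner u w = inner w u.
Proof. apply fsum_ext. intro; ring. Qed.

Lemma inner_addl u v w : inner (vadd u v) w = inner u w + inner v w.
Proof. unfold inner, vadd. rewrite <- fsum_add. apply fsum_ext; intro; ring. Qed.

Lemma inner_scall a u w : inner (vscale a u) w = a * inner u w.
Proof. unfold inner, vscale. rewrite <- fsum_scal. apply fsum_ext; intro; ring. Qed.

Lemma inner_subl u v w : inner (vsub u v) w = inner u w - inner v w.
Proof.
  replace (vsub u v) with (vadd u (vscale (-1) v)) by (extensionality c; unfold vsub, vadd, vscale; ring).
  rewrite inner_addl, inner_scall. ring.
Qed.

Lemma inner_addr u v w : inner w (vadd u v) = inner w u + inner w v.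
Proof. rewrite !(inner_comm w). apply inner_addl. Qed.

Lemma inner_subr u v w : inner w (vsub u v) = inner w u - inner w v.
Proof. rewrite !(inner_comm w). apply inner_subl. Qed.

Lemma inner_scalr a u w : inner w (vscale a u) = a * inner w u.
Proof. rewrite !(inner_comm w). apply inner_scall. Qed.

Lemma inner_0l w : inner (fun _ => 0) w = 0.
Proof. replace (fun _ : Fin.t d => 0) with (vscale 0 w) by (extensionality c; unfold vscale; ring).
  rewrite inner_scall. ring. Qed.

Lemma inner_vsumnl n (F : nat -> vec d) w :
  inner (vsumn n F) w = rsum n (fun l => inner (F l) w).
Proof.
  unfold inner, vsumn. rewrite rsum_fsum. apply fsum_ext. intro c.
  rewrite Rmult_comm, <- rsum_scal. apply rsum_ext. intros; ring.
Qed.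

Lemma inner_vsumnr n (F : nat -> vec d) w :
  inner w (vsumn n F) = rsum n (fun l => inner w (F l)).
Proof. rewrite inner_comm, inner_vsumnl. apply rsum_ext; intros; apply inner_comm. Qed.

Lemma sqnorm_ge0 u : 0 <= sqnorm u.
Proof. apply fsum_ge0. intro; nra. Qed.

Lemma sqnorm_eq0 u : sqnorm u = 0 -> u = fun _ => 0.
Proof.
  intro H. extensionality c.
  assert (u c * u c = 0) by (apply (fsum_eq0_ge0 d (fun c => u c * u c)); auto; intro; nra).
  nra.
Qed.

Lemma vnorm_ge0 u : 0 <= vnorm u.
Proof. apply sqrt_pos. Qed.

Lemma vnorm_sqr u : vnorm u ^ 2 = sqnorm u.
Proof. unfold vnorm. rewrite pow2_sqrt; [reflexivity|apply sqnorm_ge0]. Qed.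

Lemma sqnorm_add u w : sqnorm (vadd u w) = sqnorm u + 2 * inner u w + sqnorm w.
Proof. unfold sqnorm. rewrite inner_addl, !inner_addr, (inner_comm w u). ring. Qed.

Lemma sqnorm_sub u w : sqnorm (vsub u w) = sqnorm u - 2 * inner u w + sqnorm w.
Proof. unfold sqnorm. rewrite inner_subl, !inner_subr, (inner_comm w u). ring. Qed.

Lemma sqnorm_scal a u : sqnorm (vscale a u) = a ^ 2 * sqnorm u.
Proof. unfold sqnorm. rewrite inner_scall, inner_scalr. ring. Qed.

Lemma vnorm_scal a u : vnorm (vscale a u) = Rabs a * vnorm u.
Proof.
  unfold vnorm. fold (sqnorm (vscale a u)) (sqnorm u).
  rewrite sqnorm_scal, sqrt_mult_alt, <- sqrt_Rsqr_abs by apply pow2_ge_0.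
  unfold Rsqr. f_equal. f_equal. ring.
Qed.

Lemma sqnorm_sub_le_young u w b : 0 < b ->
  sqnorm (vsub u w) <= (1 + b) * sqnorm u + (1 + / b) * sqnorm w.
Proof.
  intro Hb. rewrite sqnorm_sub.
  pose proof (sqnorm_ge0 (vadd (vscale b u) w)) as H.
  rewrite sqnorm_add, sqnorm_scal, inner_scall in H.
  assert (- 2 * inner u w <= b * sqnorm u + / b * sqnorm w); [|lra].
  apply Rmult_le_reg_l with b; auto.
  replace (b * (b * sqnorm u + / b * sqnorm w)) with (b ^ 2 * sqnorm u + sqnorm w)
    by (field; lra). nra.
Qed.

Lemma mean_sqnorm_centered_le n (b : nat -> vec d) : (1 <= n)%nat ->
  / INR n * rsum n (fun i => sqnorm (vsub (b i) (vscale (/ INR n) (vsumn n b))))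
  <= / INR n * rsum n (fun i => sqnorm (b i)).
Proof.
  intro Hn. assert (0 < INR n) by (apply lt_0_INR; lia).
  set (V := vsumn n b).
  rewrite (rsum_ext n _ (fun i => sqnorm (b i) + (- 2 / INR n) * inner (b i) V
                                  + (/ INR n) ^ 2 * sqnorm V))
    by (intros; rewrite sqnorm_sub, inner_scalr, sqnorm_scal; unfold Rdiv; ring).
  rewrite !rsum_add, rsum_scal, rsum_const, <- inner_vsumnl. fold V (sqnorm V).
  pose proof (sqnorm_ge0 V).
  replace (/ INR n * (rsum n (fun i => sqnorm (b i)) + - 2 / INR n * sqnorm V
             + INR n * ((/ INR n) ^ 2 * sqnorm V)))
    with (/ INR n * rsum n (fun i => sqnorm (b i)) - (/ INR n) ^ 2 * sqnorm V) by (field; lra).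
  pose proof (pow2_ge_0 (/ INR n)). nra.
Qed.

Lemma lipschitz_sqnorm L (G : vec d -> vec d) x y : lipschitz_map L G ->
  sqnorm (vsub (G x) (G y)) <= L ^ 2 * sqnorm (vsub x y).
Proof.
  intro H. specialize (H x y). rewrite <- !vnorm_sqr.
  pose proof (vnorm_ge0 (vsub (G x) (G y))). pose proof (vnorm_ge0 (vsub x y)).
  rewrite <- Rpow_mult_distr. apply pow_incr. lra.
Qed.

End Vectors.

Section Gradients.

Context {d : nat}.
Implicit Types u v w x y : vec d.

Lemma gradient_along_ray (f : vec d -> R) G x v eps : is_gradient f G -> 0 < eps ->
  exists t0, 0 < t0 <= 1 /\ forall t, 0 < t <= t0 ->
    Rabs (f (vadd x (vscale t v)) - f x - t * inner (G x) v) <= eps * t * vnorm v.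
Proof.
  intros HG He. destruct (HG x eps He) as [del [Hdel H]].
  pose proof (vnorm_ge0 v).
  exists (Rmin 1 (del / (vnorm v + 1))). split.
  - split; [apply Rmin_glb_lt; [lra|apply Rdiv_lt_0_compat; lra]|apply Rmin_l].
  - intros t Ht.
    assert (Ht' : t * (vnorm v + 1) <= del).
    { apply Rmult_le_reg_r with (/ (vnorm v + 1)); [apply Rinv_0_lt_compat; lra|].
      replace (t * (vnorm v + 1) * / (vnorm v + 1)) with t by (field; lra).
      eapply Rle_trans; [apply Ht|apply Rmin_r]. }
    specialize (H (vscale t v)). rewrite inner_scalr, vnorm_scal, Rabs_right in H by lra.
    replace (eps * t * vnorm v) with (eps * (t * vnorm v)) by ring.
    apply H. nra.
Qed.

Lemma convex_gradient_le (f : vec d -> R) G x y : convex f -> is_gradient f G ->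
  f x + inner (G x) (vsub y x) <= f y.
Proof.
  intros Hc HG. set (v := vsub y x).
  apply (Rle_of_forall_le_add_eps _ _ (vnorm v)); [apply vnorm_ge0|]. intros eps He.
  destruct (gradient_along_ray f G x v eps HG He) as [t [Ht H]].
  specialize (H t (conj (proj1 Ht) (Rle_refl _))).
  specialize (Hc y x t (conj (Rlt_le _ _ (proj1 Ht)) (proj2 Ht))).
  replace (vadd (vscale t y) (vscale (1 - t) x)) with (vadd x (vscale t v)) in Hc
    by (extensionality c; unfold vadd, vscale, v, vsub; ring).
  apply Rabs_le_between in H.
  assert (t * inner (G x) v <= t * (f y - f x + eps * vnorm v)) by lra.
  apply Rmult_le_reg_l in H0; lra.
Qed.

Lemma strongly_convex_gradient_le (f : vec d -> R) G lam x y :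
  strongly_convex lam f -> is_gradient f G -> 0 <= lam ->
  f x + inner (G x) (vsub y x) + lam / 2 * sqnorm (vsub y x) <= f y.
Proof.
  intros Hc HG Hl. set (v := vsub y x). pose proof (sqnorm_ge0 v) as Hv.
  apply (Rle_of_forall_le_add_eps _ _ (vnorm v + lam / 2 * sqnorm v));
    [pose proof (vnorm_ge0 v); nra|]. intros eps He.
  destruct (gradient_along_ray f G x v eps HG He) as [t0 [Ht0 H]].
  set (t := Rmin t0 eps).
  assert (Ht : 0 < t <= t0) by (split; [apply Rmin_glb_lt; lra|apply Rmin_l]).
  assert (Hte : t <= eps) by apply Rmin_r.
  specialize (H t Ht).
  specialize (Hc y x t (conj (Rlt_le _ _ (proj1 Ht)) (Rle_trans _ _ _ (proj2 Ht) (proj2 Ht0)))).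
  replace (vadd (vscale t y) (vscale (1 - t) x)) with (vadd x (vscale t v)) in Hc
    by (extensionality c; unfold vadd, vscale, v, vsub; ring).
  fold v in Hc. rewrite vnorm_sqr in Hc. apply Rabs_le_between in H.
  (* the curvature loss t^2 lam/2 |v|^2 is absorbed by t <= eps *)
  assert (Hq : t * t * (lam / 2 * sqnorm v) <= t * eps * (lam / 2 * sqnorm v)).
  { apply Rmult_le_compat_r; [nra|]. apply Rmult_le_compat_l; lra. }
  assert (t * (f x + inner (G x) v + lam / 2 * sqnorm v)
          <= t * (f y + eps * (vnorm v + lam / 2 * sqnorm v))) by nra.
  apply Rmult_le_reg_l in H0; lra.
Qed.

Lemma gradient_eq0_at_min (f : vec d -> R) G xs : is_gradient f G ->
  (forall y, f xs <= f y) -> G xs = fun _ => 0.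
Proof.
  intros HG Hm. apply sqnorm_eq0. apply Rle_antisym; [|apply sqnorm_ge0].
  set (v := vscale (-1) (G xs)).
  apply (Rle_of_forall_le_add_eps _ _ (vnorm v)); [apply vnorm_ge0|]. intros eps He.
  destruct (gradient_along_ray f G xs v eps HG He) as [t [Ht H]].
  specialize (H t (conj (proj1 Ht) (Rle_refl _))).
  specialize (Hm (vadd xs (vscale t v))).
  unfold v at 2 in H. rewrite inner_scalr in H. fold (sqnorm (G xs)) in H.
  apply Rabs_le_between in H.
  assert (t * sqnorm (G xs) <= t * (0 + eps * vnorm v)) by lra.
  apply Rmult_le_reg_l in H0; lra.
Qed.

Lemma derivable_pt_lim_along_line (f : vec d -> R) G x v t : is_gradient f G ->
  derivable_pt_lim (fun t => f (vadd x (vscale t v))) t (inner (G (vadd x (vscale t v))) v).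
Proof.
  intros HG eps He. pose proof (vnorm_ge0 v) as Hv.
  set (p := vadd x (vscale t v)).
  destruct (HG p (eps / (vnorm v + 1))) as [del [Hdel H]]; [apply Rdiv_lt_0_compat; lra|].
  assert (Hd : 0 < del / (vnorm v + 1)) by (apply Rdiv_lt_0_compat; lra).
  exists (mkposreal _ Hd). simpl. intros h Hh0 Hh.
  assert (Hah : 0 < Rabs h) by (apply Rabs_pos_lt; auto).
  assert (Hlt : Rabs h * (vnorm v + 1) < del).
  { apply Rmult_lt_reg_r with (/ (vnorm v + 1)); [apply Rinv_0_lt_compat; lra|].
    replace (Rabs h * (vnorm v + 1) * / (vnorm v + 1)) with (Rabs h) by (field; lra).
    exact Hh. }
  specialize (H (vscale h v)).
  replace (vadd p (vscale h v)) with (vadd x (vscale (t + h) v)) in H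
    by (extensionality c; unfold p, vadd, vscale; ring).
  rewrite inner_scalr, vnorm_scal in H. specialize (H ltac:(nra)). fold p.
  replace ((f (vadd x (vscale (t + h) v)) - f p) / h - inner (G p) v)
    with ((f (vadd x (vscale (t + h) v)) - f p - h * inner (G p) v) / h) by (field; auto).
  unfold Rdiv. rewrite Rabs_mult, Rabs_inv.
  apply Rle_lt_trans with (eps / (vnorm v + 1) * (Rabs h * vnorm v) * / Rabs h).
  { apply Rmult_le_compat_r; [left; apply Rinv_0_lt_compat; auto|exact H]. }
  replace (eps / (vnorm v + 1) * (Rabs h * vnorm v) * / Rabs h)
    with (eps * (vnorm v / (vnorm v + 1))) by (field; lra).
  assert (vnorm v / (vnorm v + 1) < 1).
  { apply Rmult_lt_reg_r with (vnorm v + 1); [lra|].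
    unfold Rdiv. rewrite Rmult_assoc, Rinv_l by lra. lra. }
  nra.
Qed.

Lemma descent_lemma (f : vec d -> R) G L x y :
  is_gradient f G -> lipschitz_map L G -> 0 < L ->
  f y <= f x + inner (G x) (vsub y x) + L / 2 * sqnorm (vsub y x).
Proof.
  intros HG HL HL0. set (v := vsub y x). set (l0 := inner (G x) v). set (s := sqnorm v).
  set (phi := fun t => f (vadd x (vscale t v))).
  set (p := fun t : R => l0 * t + (L / 2 * s) * (t * t)).
  assert (Hp : forall t, derivable_pt_lim p t (l0 + L * s * t)).
  { intro t. apply is_derive_Reals. unfold p. auto_derive; [auto|field]. }
  destruct (MVT_cor2 (fun t => phi t - p t) _ 0 1 Rlt_0_1
              (fun c _ => derivable_pt_lim_minus phi p c _ _
                            (derivable_pt_lim_along_line f G x v c HG) (Hp c)))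
    as [c [Hc Hc01]].
  set (u := vsub (G (vadd x (vscale c v))) (G x)).
  assert (Hu : sqnorm u <= L ^ 2 * (c ^ 2 * s)).
  { unfold u. eapply Rle_trans; [apply lipschitz_sqnorm; eauto|].
    replace (vsub (vadd x (vscale c v)) x) with (vscale c v)
      by (extensionality z; unfold vsub, vadd, vscale; ring).
    rewrite sqnorm_scal. right; reflexivity. }
  assert (Hin : inner u v <= L * c * s).
  { pose proof (sqnorm_ge0 (vsub u (vscale (L * c) v))) as H0.
    rewrite sqnorm_sub, sqnorm_scal, inner_scalr in H0. fold s in H0.
    assert (HLc : 0 < L * c) by nra.
    assert (2 * (L * c) * inner u v <= 2 * (L * c) * (L * c * s)) by nra.
    apply Rmult_le_reg_l in H; nra. }
  unfold u in Hin. rewrite inner_subl in Hin. fold l0 in Hin.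
  assert (Hneg : phi 1 - p 1 - (phi 0 - p 0) <= 0) by (rewrite Hc; nra).
  unfold phi, p in Hneg.
  replace (vadd x (vscale 1 v)) with y in Hneg
    by (extensionality z; unfold v, vadd, vscale, vsub; ring).
  replace (vadd x (vscale 0 v)) with x in Hneg
    by (extensionality z; unfold v, vadd, vscale, vsub; ring).
  lra.
Qed.

Lemma cocoercive_gradient (f : vec d -> R) G L x y :
  convex f -> is_gradient f G -> lipschitz_map L G ->
  sqnorm (vsub (G y) (G x)) <= 2 * L * (f y - f x - inner (G x) (vsub y x)).
Proof.
  intros Hc HG HL.
  destruct (Rlt_le_dec 0 L) as [HL0|HL0].
  - (* compare f at y - (1/L)(G y - G x) through both the descent lemma and convexity *)
    set (u := vsub (G y) (G x)). set (w := vsub y (vscale (/ L) u)).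
    pose proof (descent_lemma f G L y w HG HL HL0) as H1.
    pose proof (convex_gradient_le f G x w Hc HG) as H2.
    replace (vsub w y) with (vscale (- / L) u) in H1
      by (extensionality z; unfold w, vsub, vscale; ring).
    replace (vsub w x) with (vsub (vsub y x) (vscale (/ L) u)) in H2
      by (extensionality z; unfold w, vsub, vscale; ring).
    rewrite inner_scalr, sqnorm_scal in H1. rewrite inner_subr, inner_scalr in H2.
    assert (E : inner (G y) u - inner (G x) u = sqnorm u) by (unfold sqnorm, u; rewrite inner_subl; ring).
    assert (/ L * sqnorm u - L / 2 * ((- / L) ^ 2 * sqnorm u)
            <= f y - f x - inner (G x) (vsub y x)) by nra.
    replace (/ L * sqnorm u - L / 2 * ((- / L) ^ 2 * sqnorm u)) with (/ (2 * L) * sqnorm u)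
      in H by (field; lra).
    apply Rmult_le_reg_l with (/ (2 * L)); [apply Rinv_0_lt_compat; lra|].
    replace (/ (2 * L) * (2 * L * (f y - f x - inner (G x) (vsub y x))))
      with (f y - f x - inner (G x) (vsub y x)) by (field; lra). lra.
  - (* a nonpositive Lipschitz constant forces G y = G x *)
    pose proof (HL y x). pose proof (vnorm_ge0 (vsub (G y) (G x))).
    pose proof (vnorm_ge0 (vsub y x)).
    assert (Hz : vnorm (vsub (G y) (G x)) = 0) by nra.
    rewrite <- vnorm_sqr, Hz.
    destruct (Req_dec L 0) as [->|HLn]; [lra|].
    assert (Hyx : vsub y x = fun _ => 0)
      by (apply sqnorm_eq0; rewrite <- vnorm_sqr; replace (vnorm (vsub y x)) with 0 by nra; ring).
    assert (y = x) by (extensionality c; pose proof (equal_f Hyx c); unfold vsub in *; lra).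
    subst y. rewrite Hyx, inner_comm, inner_0l. lra.
Qed.

Lemma gradient_add (f1 f2 : vec d -> R) G1 G2 : is_gradient f1 G1 -> is_gradient f2 G2 ->
  is_gradient (fun x => f1 x + f2 x) (fun x => vadd (G1 x) (G2 x)).
Proof.
  intros H1 H2 x eps He.
  destruct (H1 x (eps / 2)) as [d1 [Hd1 K1]]; [lra|].
  destruct (H2 x (eps / 2)) as [d2 [Hd2 K2]]; [lra|].
  exists (Rmin d1 d2). split; [apply Rmin_glb_lt; auto|].
  intros h Hh. rewrite inner_addl.
  specialize (K1 h (Rlt_le_trans _ _ _ Hh (Rmin_l _ _))).
  specialize (K2 h (Rlt_le_trans _ _ _ Hh (Rmin_r _ _))).
  apply Rabs_le_between in K1, K2. apply Rabs_le. lra.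
Qed.

Lemma gradient_scal (f : vec d -> R) G a : is_gradient f G ->
  is_gradient (fun x => a * f x) (fun x => vscale a (G x)).
Proof.
  intros H x eps He. pose proof (Rabs_pos a).
  destruct (H x (eps / (Rabs a + 1))) as [del [Hdel K]]; [apply Rdiv_lt_0_compat; lra|].
  exists del. split; auto. intros h Hh. specialize (K h Hh). pose proof (vnorm_ge0 h).
  rewrite inner_scall.
  replace (a * f (vadd x h) - a * f x - a * inner (G x) h)
    with (a * (f (vadd x h) - f x - inner (G x) h)) by ring.
  rewrite Rabs_mult.
  apply Rle_trans with (Rabs a * (eps / (Rabs a + 1) * vnorm h)); [apply Rmult_le_compat_l; auto|].
  replace (Rabs a * (eps / (Rabs a + 1) * vnorm h))
    with (eps * vnorm h * (Rabs a / (Rabs a + 1))) by (field; lra).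
  assert (Rabs a / (Rabs a + 1) <= 1).
  { apply Rmult_le_reg_r with (Rabs a + 1); [lra|].
    unfold Rdiv. rewrite Rmult_assoc, Rinv_l by lra. lra. }
  assert (0 <= eps * vnorm h) by nra. nra.
Qed.

Lemma gradient_rsum n (fs : nat -> vec d -> R) G :
  (forall i, (i < n)%nat -> is_gradient (fs i) (G i)) ->
  is_gradient (fun x => rsum n (fun i => fs i x)) (fun x => vsumn n (fun l => G l x)).
Proof.
  induction n as [|n IH]; intro H.
  - intros x eps He. exists 1. split; [lra|]. intros h _.
    replace (vsumn 0 (fun l => G l x)) with (fun _ : Fin.t d => 0) by reflexivity.
    rewrite inner_0l. simpl rsum. replace (0 - 0 - 0) with 0 by ring. rewrite Rabs_R0.
    pose proof (vnorm_ge0 h). nra.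
  - apply (gradient_add _ _ _ _ (IH (fun i Hi => H i (Nat.lt_lt_succ_r _ _ Hi)))
                                 (H n (Nat.lt_succ_diag_r n))).
Qed.

Lemma gradient_favg n (fs : nat -> vec d -> R) G :
  (forall i, (i < n)%nat -> is_gradient (fs i) (G i)) ->
  is_gradient (favg n fs) (fun x => vscale (/ INR n) (vsumn n (fun l => G l x))).
Proof. intro H. apply gradient_scal, gradient_rsum, H. Qed.

End Gradients.

Lemma epoch_E_le {d} n eta (g : nat -> vec d -> vec d) S r x al hist K1 K2 :
  (forall h a, K1 h a <= K2 h a) ->
  epoch_E n eta g S r x al hist K1 <= epoch_E n eta g S r x al hist K2.
Proof.
  intro HK. revert x al hist. induction r as [|r IH]; intros; simpl; auto.
  apply Rmult_le_compat_l; [apply inv_INR_ge0|]. apply rsum_le. intros; apply IH.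
Qed.

Lemma epoch_E_scal {d} n eta (g : nat -> vec d -> vec d) S r x al hist K s :
  epoch_E n eta g S r x al hist (fun h a => s * K h a) = s * epoch_E n eta g S r x al hist K.
Proof.
  revert x al hist. induction r as [|r IH]; intros; simpl; auto.
  rewrite (rsum_ext n _ (fun i => s * epoch_E n eta g S r (step_x n eta g al x i)
                                     (step_al S al x i) (hist ++ x :: nil) K))
    by (intros; apply IH).
  rewrite rsum_scal. ring.
Qed.

Lemma hsag_theta_ge0 n m L lam c beta kappa eta : 1 < kappa ->
  0 <= hsag_theta n m L lam c beta kappa eta.
Proof.
  intro Hk. eapply Rle_trans; [|apply Rmax_r]. apply pow_le.
  assert (/ kappa < 1) by (rewrite <- Rinv_1; apply Rinv_lt_contravar; lra). lra.
Qed.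

Section HSAG.

Variables (n d : nat) (fs : nat -> vec d -> R) (g : nat -> vec d -> vec d) (L : R) (xs : vec d).
Hypothesis n_ge1 : (1 <= n)%nat.
Hypothesis fs_convex : forall i, (i < n)%nat -> convex (fs i).
Hypothesis fs_gradient : forall i, (i < n)%nat -> is_gradient (fs i) (g i).
Hypothesis g_lipschitz : forall i, (i < n)%nat -> lipschitz_map L (g i).
Hypothesis xs_min : forall y, favg n fs xs <= favg n fs y.

Let INR_n_pos : 0 < INR n := lt_0_INR n n_ge1.
Let inv_n_pos : 0 < / INR n := Rinv_0_lt_compat _ INR_n_pos.

Definition subopt (y : vec d) := favg n fs y - favg n fs xs.
Definition bregman i y := fs i y - fs i xs - inner (g i xs) (vsub y xs).
Definition mean_grad x := vscale (/ INR n) (vsumn n (fun l => g l x)).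

Lemma mean_const a : / INR n * rsum n (fun _ => a) = a.
Proof. rewrite rsum_const. field. lra. Qed.

Lemma subopt_ge0 y : 0 <= subopt y.
Proof. unfold subopt. specialize (xs_min y). lra. Qed.

Lemma bregman_ge0 i y : (i < n)%nat -> 0 <= bregman i y.
Proof.
  intro Hi. pose proof (convex_gradient_le (fs i) (g i) xs y (fs_convex i Hi) (fs_gradient i Hi)).
  unfold bregman. lra.
Qed.

Lemma L_bregman_ge0 i y : (i < n)%nat -> 0 <= L * bregman i y.
Proof.
  intro Hi.
  pose proof (cocoercive_gradient (fs i) (g i) L xs y
                (fs_convex i Hi) (fs_gradient i Hi) (g_lipschitz i Hi)).
  pose proof (sqnorm_ge0 (vsub (g i y) (g i xs))). unfold bregman. lra.
Qed.

Lemma vsumn_gradient_min : vsumn n (fun l => g l xs) = fun _ => 0.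
Proof.
  pose proof (gradient_eq0_at_min _ _ xs (gradient_favg n fs g fs_gradient) xs_min) as H.
  extensionality c. pose proof (equal_f H c) as Hc. unfold vscale in Hc.
  apply Rmult_eq_reg_l with (/ INR n); [rewrite Hc; ring|lra].
Qed.

Lemma subopt_mean_bregman y : subopt y = / INR n * rsum n (fun i => bregman i y).
Proof.
  unfold subopt, favg, bregman. rewrite !rsum_sub, <- inner_vsumnl, vsumn_gradient_min, inner_0l.
  ring.
Qed.

Lemma mean_sqnorm_gradient_sub_le (y : nat -> vec d) :
  / INR n * rsum n (fun i => sqnorm (vsub (g i (y i)) (g i xs)))
  <= 2 * L * (/ INR n * rsum n (fun i => bregman i (y i))).
Proof.
  replace (2 * L * (/ INR n * rsum n (fun i => bregman i (y i))))
    with (/ INR n * rsum n (fun i => 2 * L * bregman i (y i))) by (rewrite rsum_scal; ring).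
  apply Rmult_le_compat_l; [lra|]. apply rsum_le. intros i Hi.
  apply cocoercive_gradient; auto.
Qed.

Definition table_gap (S : nat -> bool) (al : nat -> vec d) :=
  / INR n * rsum n (fun l => if S l then bregman l (al l) else 0).

Lemma table_gap_ge0 S al : 0 <= table_gap S al.
Proof.
  apply Rmult_le_pos; [lra|]. apply rsum_ge0. intros i Hi.
  destruct (S i); [apply bregman_ge0; auto|lra].
Qed.

Lemma table_gap_const_le S x : table_gap S (fun _ => x) <= subopt x.
Proof.
  rewrite subopt_mean_bregman. apply Rmult_le_compat_l; [lra|]. apply rsum_le. intros i Hi.
  destruct (S i); [lra|apply bregman_ge0; auto].
Qed.

Lemma table_gap_step S al x :
  / INR n * rsum n (fun i => table_gap S (step_al S al x i))
  = (1 - / INR n) * table_gap S al + / INR n * table_gap S (fun _ => x).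
Proof.
  unfold table_gap. rewrite rsum_scal, rsum_exchange.
  rewrite (rsum_ext n _ (fun l => (if S l then bregman l x else 0)
                                + (INR n - 1) * (if S l then bregman l (al l) else 0))).
  - rewrite rsum_add, rsum_scal. field. lra.
  - intros l Hl. unfold step_al. destruct (S l); simpl.
    + rewrite <- (rsum_eqb n l) by exact Hl. apply rsum_ext. intros i _. now destruct (l =? i).
    + rewrite rsum_const. ring.
Qed.

Lemma L_mean_bregman_table_le S al xt : (forall i, (i < n)%nat -> S i = false -> al i = xt) ->
  L * (/ INR n * rsum n (fun i => bregman i (al i))) <= L * (table_gap S al + subopt xt).
Proof.
  intro Hal. rewrite subopt_mean_bregman. unfold table_gap.
  replace (L * (/ INR n * rsum n (fun i => bregman i (al i))))
    with (/ INR n * rsum n (fun i => L * bregman i (al i))) by (rewrite rsum_scal; ring).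
  replace (L * (/ INR n * rsum n (fun l => if S l then bregman l (al l) else 0)
                + / INR n * rsum n (fun i => bregman i xt)))
    with (/ INR n * rsum n (fun i => L * ((if S i then bregman i (al i) else 0) + bregman i xt)))
    by (rewrite rsum_scal, rsum_add; ring).
  apply Rmult_le_compat_l; [lra|]. apply rsum_le. intros i Hi.
  pose proof (L_bregman_ge0 i xt Hi).
  destruct (S i) eqn:HSi; [lra|]. rewrite Hal by auto. lra.
Qed.

Definition hsag_dir al x i :=
  vadd (vsub (g i x) (g i (al i))) (vscale (/ INR n) (vsumn n (fun l => g l (al l)))).

Lemma mean_sqdist_step eta al x :
  / INR n * rsum n (fun i => sqnorm (vsub (step_x n eta g al x i) xs))
  = sqnorm (vsub x xs) - 2 * eta * inner (mean_grad x) (vsub x xs)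
    + eta ^ 2 * (/ INR n * rsum n (fun i => sqnorm (hsag_dir al x i))).
Proof.
  set (w := vsub x xs). set (A := vsumn n (fun l => g l (al l))).
  rewrite (rsum_ext n _ (fun i => sqnorm w + (- 2 * eta) * inner w (g i x)
                                  + (2 * eta) * inner w (g i (al i))
                                  + (- 2 * eta * / INR n) * inner w A
                                  + eta ^ 2 * sqnorm (hsag_dir al x i))).
  2:{ intros i Hi.
      replace (vsub (step_x n eta g al x i) xs) with (vsub w (vscale eta (hsag_dir al x i)))
        by (extensionality c; unfold step_x, w, hsag_dir, vsub, vscale, vadd; ring).
      rewrite sqnorm_sub, sqnorm_scal, inner_scalr. unfold hsag_dir.
      rewrite inner_addr, inner_subr, inner_scalr. fold A. ring. }
  rewrite !rsum_add, !rsum_scal, !rsum_const, <- (inner_vsumnr n (fun i => g i x) w),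
    <- (inner_vsumnr n (fun i => g i (al i)) w).
  fold A. unfold mean_grad. rewrite inner_scall, (inner_comm (vsumn n (fun l => g l x)) w).
  field. lra.
Qed.

Lemma mean_sqnorm_dir_le beta al x : 0 < beta ->
  / INR n * rsum n (fun i => sqnorm (hsag_dir al x i))
  <= (1 + beta) * (/ INR n * rsum n (fun i => sqnorm (vsub (g i x) (g i xs))))
     + (1 + / beta) * (/ INR n * rsum n (fun i => sqnorm (vsub (g i (al i)) (g i xs)))).
Proof.
  intro Hb. set (b := fun i => vsub (g i (al i)) (g i xs)).
  (* since sum_l g_l(xs) = 0, the direction is (g_i x - g_i xs) minus a centred table term *)
  assert (E : forall i, hsag_dir al x i
                        = vsub (vsub (g i x) (g i xs)) (vsub (b i) (vscale (/ INR n) (vsumn n b)))).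
  { intro i. extensionality c. pose proof (equal_f vsumn_gradient_min c) as H0.
    unfold hsag_dir, b, vsub, vadd, vscale, vsumn in *. rewrite rsum_sub, H0. ring. }
  apply Rle_trans with
    (/ INR n * rsum n (fun i => (1 + beta) * sqnorm (vsub (g i x) (g i xs))
          + (1 + / beta) * sqnorm (vsub (b i) (vscale (/ INR n) (vsumn n b))))).
  { apply Rmult_le_compat_l; [lra|]. apply rsum_le. intros i _. rewrite E.
    apply sqnorm_sub_le_young, Hb. }
  rewrite rsum_add, !rsum_scal.
  pose proof (mean_sqnorm_centered_le n b n_ge1) as Hc.
  apply (Rmult_le_compat_l (1 + / beta)) in Hc; [|pose proof (Rinv_0_lt_compat _ Hb); lra].
  unfold b in *. lra.
Qed.

Lemma mean_sqdist_step_le S eta beta al x xt : 0 < beta ->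
  (forall i, (i < n)%nat -> S i = false -> al i = xt) ->
  / INR n * rsum n (fun i => sqnorm (vsub (step_x n eta g al x i) xs))
  <= sqnorm (vsub x xs) - 2 * eta * inner (mean_grad x) (vsub x xs)
     + 2 * L * eta ^ 2 * ((1 + beta) * subopt x + (1 + / beta) * (table_gap S al + subopt xt)).
Proof.
  intros Hb Hal. rewrite mean_sqdist_step.
  pose proof (Rinv_0_lt_compat _ Hb).
  pose proof (mean_sqnorm_dir_le beta al x Hb) as HV.
  pose proof (mean_sqnorm_gradient_sub_le (fun _ => x)) as HA.
  cbv beta in HA. rewrite <- subopt_mean_bregman in HA.
  pose proof (mean_sqnorm_gradient_sub_le al) as HB.
  pose proof (L_mean_bregman_table_le S al xt Hal) as HT.
  apply (Rmult_le_compat_l (1 + beta)) in HA; [|lra].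
  apply (Rmult_le_compat_l (1 + / beta)) in HB; [|lra].
  apply (Rmult_le_compat_l (2 * (1 + / beta))) in HT; [|lra].
  assert (HV' : / INR n * rsum n (fun i => sqnorm (hsag_dir al x i))
                <= 2 * L * ((1 + beta) * subopt x + (1 + / beta) * (table_gap S al + subopt xt)))
    by lra.
  apply (Rmult_le_compat_l (eta ^ 2)) in HV'; [lra|apply pow2_ge_0].
Qed.

Variable lam : R.
Hypothesis lam_pos : 0 < lam.
Hypothesis f_strongly_convex : strongly_convex lam (favg n fs).

Lemma sqdist_le_subopt x : lam / 2 * sqnorm (vsub x xs) <= subopt x.
Proof.
  pose proof (strongly_convex_gradient_le _ _ lam xs x f_strongly_convex
                (gradient_favg n fs g fs_gradient) (Rlt_le _ _ lam_pos)) as K.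
  cbv beta in K. rewrite vsumn_gradient_min, inner_scall, inner_0l in K.
  unfold subopt. lra.
Qed.

Lemma mean_grad_inner_ge x :
  subopt x + lam / 2 * sqnorm (vsub x xs) <= inner (mean_grad x) (vsub x xs).
Proof.
  pose proof (strongly_convex_gradient_le _ _ lam x xs f_strongly_convex
                (gradient_favg n fs g fs_gradient) (Rlt_le _ _ lam_pos)) as K.
  replace (vsub xs x) with (vscale (-1) (vsub x xs)) in K
    by (extensionality c; unfold vscale, vsub; ring).
  rewrite inner_scalr, sqnorm_scal in K. unfold subopt, mean_grad. lra.
Qed.

Variables (c beta kappa eta : R).
Hypotheses (c_pos : 0 < c) (beta_pos : 0 < beta) (kappa_gt1 : 1 < kappa) (eta_pos : 0 < eta).
Hypothesis step_condition : / kappa + 2 * L * c * eta ^ 2 * (1 + / beta) <= / INR n.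

Let inv_kappa_bounds : 0 < / kappa < 1.
Proof.
  split; [apply Rinv_0_lt_compat; lra|]. rewrite <- Rinv_1. apply Rinv_lt_contravar; lra.
Qed.

Definition lyap S x al := c * sqnorm (vsub x xs) + table_gap S al.

Definition descent_rate := 2 * c * eta * (1 - L * eta * (1 + beta)) - / INR n - 2 * c / (kappa * lam).

Lemma lyap_step S al x xt : (forall i, (i < n)%nat -> S i = false -> al i = xt) ->
  / INR n * rsum n (fun i => lyap S (step_x n eta g al x i) (step_al S al x i))
  <= (1 - / kappa) * lyap S x al - descent_rate * subopt x
     + 2 * c * L * eta ^ 2 * (1 + / beta) * subopt xt.
Proof.
  intro Hal. unfold lyap, descent_rate.
  rewrite rsum_add, rsum_scal, Rmult_plus_distr_l, table_gap_step.
  pose proof (mean_sqdist_step_le S eta beta al x xt beta_pos Hal) as Hd.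
  apply (Rmult_le_compat_l c) in Hd; [|lra].
  pose proof (sqnorm_ge0 (vsub x xs)) as Hs0.
  assert (Hi : 2 * c * eta * subopt x <= 2 * c * eta * inner (mean_grad x) (vsub x xs)).
  { apply Rmult_le_compat_l; [nra|]. pose proof (mean_grad_inner_ge x). nra. }
  (* c |x - xs|^2 = (1 - 1/kappa) c |x - xs|^2 + (2c / (kappa lam)) (lam/2) |x - xs|^2 *)
  assert (Hs : / kappa * (c * sqnorm (vsub x xs)) <= 2 * c / (kappa * lam) * subopt x).
  { pose proof (sqdist_le_subopt x) as H.
    apply (Rmult_le_compat_l (2 * c / (kappa * lam))) in H; [|apply Rlt_le, Rdiv_lt_0_compat; nra].
    replace (2 * c / (kappa * lam) * (lam / 2 * sqnorm (vsub x xs)))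
      with (/ kappa * (c * sqnorm (vsub x xs))) in H by (field; lra).
    exact H. }
  assert (Ht : (/ kappa + 2 * L * c * eta ^ 2 * (1 + / beta)) * table_gap S al
               <= / INR n * table_gap S al)
    by (apply Rmult_le_compat_r; [apply table_gap_ge0|exact step_condition]).
  assert (Hx : / INR n * table_gap S (fun _ => x) <= / INR n * subopt x)
    by (apply Rmult_le_compat_l; [lra|apply table_gap_const_le]).
  lra.
Qed.

Variable m : nat.
Hypothesis m_ge1 : (1 <= m)%nat.

Let weights_sum_pos : 0 < kappa * (1 - (1 - / kappa) ^ m).
Proof.
  apply Rmult_lt_0_compat; [lra|].
  assert (0 <= 1 - / kappa < 1) by lra.
  pose proof (pow_lt_1_compat _ _ H m_ge1). lra.
Qed.

Definition epoch_loss xt r (hist : list (vec d)) :=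
  rsum r (fun l => (1 - / kappa) ^ (m - (l + 1)) * subopt (nth l hist xt)).

Lemma epoch_loss_snoc xt hist x :
  epoch_loss xt (length hist + 1) (hist ++ x :: nil)
  = epoch_loss xt (length hist) hist + (1 - / kappa) ^ (m - (length hist + 1)) * subopt x.
Proof.
  unfold epoch_loss. rewrite Nat.add_1_r. cbn [rsum]. rewrite nth_middle.
  f_equal; [|now rewrite Nat.add_1_r].
  apply rsum_ext. intros l Hl. rewrite app_nth1 by exact Hl. reflexivity.
Qed.

Lemma epoch_lyap_bound S xt : forall r x al hist, (length hist + r)%nat = m ->
  (forall i, (i < n)%nat -> S i = false -> al i = xt) ->
  epoch_E n eta g S r x al hist (fun h a => descent_rate * epoch_loss xt m h + table_gap S a)
  <= (1 - / kappa) ^ r * lyap S x al + descent_rate * epoch_loss xt (length hist) hist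
     + 2 * c * L * eta ^ 2 * (1 + / beta) * subopt xt * rsum r (fun i => (1 - / kappa) ^ i).
Proof.
  induction r as [|r IH]; intros x al hist Hlen Hal.
  - rewrite Nat.add_0_r in Hlen. rewrite Hlen. cbn [epoch_E rsum pow]. unfold lyap.
    pose proof (sqnorm_ge0 (vsub x xs)). nra.
  - cbn [epoch_E]. eapply Rle_trans.
    { apply Rmult_le_compat_l; [lra|]. apply rsum_le. intros i _. apply IH.
      - rewrite length_app. simpl. lia.
      - intros l Hl HSl. unfold step_al. rewrite HSl. simpl. auto. }
    rewrite length_app. simpl length. rewrite epoch_loss_snoc.
    replace (m - (length hist + 1))%nat with r by lia.
    rewrite !rsum_add, !Rmult_plus_distr_l, rsum_scal, !mean_const.
    pose proof (lyap_step S al x xt Hal) as Hstep.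
    apply (Rmult_le_compat_l ((1 - / kappa) ^ r)) in Hstep; [|apply pow_le; lra].
    cbn [rsum pow]. lra.
Qed.

Lemma hsag_gamma_eq :
  hsag_gamma n m L lam c beta kappa eta = kappa * (1 - (1 - / kappa) ^ m) * descent_rate.
Proof. reflexivity. Qed.

Lemma hsag_p_eq j :
  hsag_p kappa m j = (1 - / kappa) ^ (m - j) / (kappa * (1 - (1 - / kappa) ^ m)).
Proof. unfold hsag_p. rewrite rsum_rev, rsum_geometric_inv by lra. reflexivity. Qed.

Lemma selection_average S xt hist a :
  rsum m (fun l => hsag_p kappa m (l + 1)
                   * (hsag_gamma n m L lam c beta kappa eta * subopt (nth l hist xt)
                      + table_gap S a))
  = descent_rate * epoch_loss xt m hist + table_gap S a.
Proof.
  set (Z := kappa * (1 - (1 - / kappa) ^ m)).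
  rewrite (rsum_ext m _ (fun l => descent_rate * ((1 - / kappa) ^ (m - (l + 1))
                                                  * subopt (nth l hist xt))
                                  + table_gap S a / Z * (1 - / kappa) ^ (m - (l + 1)))).
  - rewrite rsum_add, !rsum_scal, rsum_rev, rsum_geometric_inv by lra.
    unfold epoch_loss. fold Z. field. unfold Z. lra.
  - intros l _. rewrite hsag_p_eq, hsag_gamma_eq. fold Z. field. unfold Z. lra.
Qed.

Hypothesis gamma_pos : 0 < hsag_gamma n m L lam c beta kappa eta.

Lemma epoch_contraction S xt al :
  epoch_E n eta g S m xt (fun l => if S l then al l else xt) nil
    (fun h a => descent_rate * epoch_loss xt m h + table_gap S a)
  <= hsag_theta n m L lam c beta kappa eta
     * (hsag_gamma n m L lam c beta kappa eta * subopt xt + table_gap S al).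
Proof.
  set (gam := hsag_gamma n m L lam c beta kappa eta) in *.
  set (q := 1 - / kappa).
  eapply Rle_trans.
  { apply epoch_lyap_bound; [reflexivity|]. intros i _ HSi. rewrite HSi. reflexivity. }
  assert (Hreset : table_gap S (fun l => if S l then al l else xt) = table_gap S al).
  { unfold table_gap. f_equal. apply rsum_ext. intros l _. now destruct (S l). }
  unfold lyap. rewrite Hreset, rsum_geometric_inv by lra. fold q.
  replace (epoch_loss xt (length nil) nil) with 0 by reflexivity.
  pose proof (subopt_ge0 xt). pose proof (table_gap_ge0 S al).
  assert (Hsq : c * sqnorm (vsub xt xs) <= 2 * c / lam * subopt xt).
  { pose proof (sqdist_le_subopt xt) as H1.
    apply (Rmult_le_compat_l (2 * c / lam)) in H1; [|apply Rlt_le, Rdiv_lt_0_compat; lra].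
    replace (2 * c / lam * (lam / 2 * sqnorm (vsub xt xs))) with (c * sqnorm (vsub xt xs))
      in H1 by (field; lra). exact H1. }
  set (th1 := 2 * c / (gam * lam) * q ^ m
              + 2 * L * c * eta ^ 2 / gam * (1 + / beta) * kappa * (1 - q ^ m)).
  assert (Hth : th1 <= hsag_theta n m L lam c beta kappa eta /\
                q ^ m <= hsag_theta n m L lam c beta kappa eta)
    by (split; [apply Rmax_l|apply Rmax_r]).
  (* th1 * gamma is exactly the coefficient of subopt xt left by the epoch bound *)
  assert (Hth1 : th1 * gam = 2 * c / lam * q ^ m
                             + 2 * c * L * eta ^ 2 * (1 + / beta) * (kappa * (1 - q ^ m)))
    by (unfold th1; field; lra).
  assert (q ^ m * (c * sqnorm (vsub xt xs)) <= q ^ m * (2 * c / lam * subopt xt))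
    by (apply Rmult_le_compat_l; [apply pow_le; unfold q; lra|exact Hsq]).
  assert (th1 * gam * subopt xt <= hsag_theta n m L lam c beta kappa eta * gam * subopt xt)
    by (apply Rmult_le_compat_r; [lra|apply Rmult_le_compat_r; lra]).
  assert (q ^ m * table_gap S al <= hsag_theta n m L lam c beta kappa eta * table_gap S al)
    by (apply Rmult_le_compat_r; lra).
  rewrite Hth1 in *. lra.
Qed.

Lemma hsag_E_lyapunov_bound S k : forall xt al,
  hsag_gamma n m L lam c beta kappa eta * hsag_E n m eta kappa g S subopt k xt al
  <= hsag_theta n m L lam c beta kappa eta ^ k
     * (hsag_gamma n m L lam c beta kappa eta * subopt xt + table_gap S al).
Proof.
  set (gam := hsag_gamma n m L lam c beta kappa eta) in *.
  set (th := hsag_theta n m L lam c beta kappa eta).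
  pose proof (hsag_theta_ge0 n m L lam c beta kappa eta kappa_gt1) as Hth.
  induction k as [|k IH]; intros xt al.
  - pose proof (table_gap_ge0 S al). simpl. lra.
  - cbn [hsag_E]. rewrite <- epoch_E_scal. eapply Rle_trans.
    { apply (epoch_E_le _ _ _ _ _ _ _ _ _
               (fun h a => th ^ k * (descent_rate * epoch_loss xt m h + table_gap S a))).
      intros h a. rewrite <- (selection_average S xt h a), <- !rsum_scal.
      apply rsum_le. intros l _.
      assert (Hp : 0 <= hsag_p kappa m (l + 1)).
      { rewrite hsag_p_eq. apply Rle_mult_inv_pos; [apply pow_le; lra|exact weights_sum_pos]. }
      specialize (IH (nth l h xt) a). apply (Rmult_le_compat_l _ _ _ Hp) in IH. fold gam. lra. }
    rewrite epoch_E_scal. cbn [pow]. rewrite (Rmult_comm th), Rmult_assoc.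
    apply Rmult_le_compat_l; [apply pow_le, Hth|apply epoch_contraction].
Qed.

Lemma hsag_E_start_le S x0 k :
  hsag_E n m eta kappa g S subopt k x0 (fun _ => x0)
  <= hsag_theta n m L lam c beta kappa eta ^ k
     * (1 + / hsag_gamma n m L lam c beta kappa eta) * subopt x0.
Proof.
  pose proof (hsag_E_lyapunov_bound S k x0 (fun _ => x0)) as H.
  pose proof (table_gap_const_le S x0).
  pose proof (pow_le _ k (hsag_theta_ge0 n m L lam c beta kappa eta kappa_gt1)).
  pose proof gamma_pos.
  set (gam := hsag_gamma n m L lam c beta kappa eta) in *.
  apply Rmult_le_reg_l with gam; [exact gamma_pos|].
  replace (gam * (hsag_theta n m L lam c beta kappa eta ^ k * (1 + / gam) * subopt x0))
    with (hsag_theta n m L lam c beta kappa eta ^ k * (gam * subopt x0 + subopt x0))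
    by (field; lra).
  eapply Rle_trans; [exact H|]. apply Rmult_le_compat_l; lra.
Qed.

End HSAG.

Theorem corollary1
  (n d m : nat) (fs : nat -> vec d -> R) (g : nat -> vec d -> vec d)
  (L lam c beta kappa eta : R) (Sset : nat -> bool) (xstar x0 : vec d) :
  (1 <= n)%nat -> (1 <= m)%nat ->
  (forall i, (i < n)%nat -> convex (fs i)) ->
  (forall i, (i < n)%nat -> is_gradient (fs i) (g i)) ->
  (forall i, (i < n)%nat -> lipschitz_map L (g i)) ->
  0 < lam -> strongly_convex lam (favg n fs) ->
  (forall y, favg n fs xstar <= favg n fs y) ->
  0 < c -> 0 < beta -> 1 < kappa -> 0 < eta ->
  / kappa + 2 * L * c * eta ^ 2 * (1 + / beta) <= / INR n ->
  0 < hsag_gamma n m L lam c beta kappa eta ->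
  hsag_theta n m L lam c beta kappa eta < 1 ->
  hsag_theta n m L lam c beta kappa eta * (1 + / hsag_gamma n m L lam c beta kappa eta) < 1 ->
  forall k : nat,
    hsag_E n m eta kappa g Sset (fun y => favg n fs y - favg n fs xstar) k x0 (fun _ => x0)
    <= (hsag_theta n m L lam c beta kappa eta
        * (1 + / hsag_gamma n m L lam c beta kappa eta)) ^ k
       * (favg n fs x0 - favg n fs xstar).
Proof.
  (* the bound holds without the two hypotheses theta < 1 and theta (1 + 1/gamma) < 1 *)
  intros Hn Hm Hconv Hgrad Hlip Hlam Hstrong Hmin Hc Hbeta Hkappa Heta Hstep Hgam _ _ k.
  pose proof (hsag_E_start_le n d fs g L xstar Hn Hconv Hgrad Hlip Hmin lam Hlam Hstrong
                c beta kappa eta Hc Hbeta Hkappa Heta Hstep m Hm Hgam Sset x0 k) as H.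
  pose proof (subopt_ge0 n d fs xstar Hmin x0) as H0.
  pose proof (hsag_theta_ge0 n m L lam c beta kappa eta Hkappa) as Hth.
  unfold subopt in H, H0.
  set (gam := hsag_gamma n m L lam c beta kappa eta) in *.
  set (th := hsag_theta n m L lam c beta kappa eta) in *.
  destruct k as [|k]; [simpl; lra|].
  eapply Rle_trans; [exact H|]. rewrite Rpow_mult_distr.
  apply Rmult_le_compat_r; [exact H0|]. apply Rmult_le_compat_l; [apply pow_le, Hth|].
  rewrite <- (pow_1 (1 + / gam)) at 1.
  apply Rle_pow; [pose proof (Rinv_0_lt_compat _ Hgam); lra|lia].
Qed.
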